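(* Let $\mathcal{C}$ be a category. Natural weak factorisation systems on $\mathcal{C}$ are in bijection with bialgebras in the strict 2-fold monoidal category $(\mathbf{Ff}_{\mathcal{C}},\otimes,I,\odot,\bot)$ described below.
   Context: $\mathcal{C}^{\mathbf 2}$ is the arrow category (objects: morphisms $f\colon X\to Y$; morphisms $(h,k)\colon f\to g$: commuting squares $gh=kf$). A functorial factorisation $(E,\lambda,\rho)$ is a functor $E\colon\mathcal{C}^{\mathbf 2}\to\mathcal{C}$ with natural $\lambda\colon\mathrm{dom}\Rightarrow E$, $\rho\colon E\Rightarrow\mathrm{cod}$, $\rho_f\lambda_f=f$. $\mathbf{Ff}_{\mathcal{C}}$ has these as objects and as morphisms natural $\alpha\colon E\Rightarrow E'$ with $\alpha\lambda=\lambda'$, $\rho'\alpha=\rho$. Monoidal structures: $(E',\lambda',\rho')\otimes(E,\lambda,\rho)$ factorises $f$ as $X\xrightarrow{\lambda'_{\rho_f}\lambda_f}E'(\rho_f)\xrightarrow{\rho'_{\rho_f}}Y$, unit $I=(\mathrm{dom},1,\kappa)$ (initial); $(E',\lambda',\rho')\odot(E,\lambda,\rho)$ factorises $f$ as $X\xrightarrow{\lambda'_{\lambda_f}}E'(\lambda_f)\xrightarrow{\rho_f\rho'_{\lambda_f}}Y$, unit $\bot=(\mathrm{cod},\kappa,1)$ (terminal); on morphisms $(\beta\otimes\alpha)_f=\beta_{\nu_f}E'(\alpha_f,1_Y)$, $(\beta\odot\alpha)_f=\beta_{\mu_f}E'(1_X,\alpha_f)$ for $\alpha\colon(E,\lambda,\rho)\to(F,\mu,\nu)$,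 $\beta\colon(E',\ldots)\to(F',\mu',\nu')$. The 2-fold structure: $m,c,j$ are the unique maps (from the initial / to the terminal object), and for $A=(E^1,\lambda^1,\rho^1)$, $B=(E^2,\ldots)$, $C=(E^3,\ldots)$, $D=(E^4,\ldots)$ the component at $f\colon X\to Y$ of $z_{A,B,C,D}\colon(A\odot B)\otimes(C\odot D)\to(A\otimes C)\odot(B\otimes D)$ is $E^1\big(E^3(1_X,\lambda^2_{\rho^4_f}),\,E^2(\rho^3_{\lambda^4_f},1_Y)\big)$. A bialgebra is $(A,\eta,\mu,\epsilon,\Delta)$ with $(A,\eta,\mu)$ a $\otimes$-monoid, $(A,\epsilon,\Delta)$ a $\odot$-comonoid, such that $\Delta\eta=(\eta\odot\eta)c$, $\epsilon\mu=m(\epsilon\otimes\epsilon)$, $\epsilon\eta=j$ and $\Delta\mu=(\mu\odot\mu)\,z_{A,A,A,A}\,(\Delta\otimes\Delta)$. A natural weak factorisation system (n.w.f.s.) on $\mathcal{C}$ is a functorial factorisation $(E,\lambda,\rho)$ together with natural families $\sigma_f\colon Ef\to E(\lambda_f)$ and $\pi_f\colon E(\rho_f)\to Ef$ (natural in $f$, where $L,R\colon\mathcal{C}^{\mathbf 2}\to\mathcal{C}^{\mathbf 2}$ send $f$ to $\lambda_f$, $\rho_f$) satisfying $\sigma_f\lambda_f=\lambda_{\lambda_f}$, $\rho_f\pi_f=\rho_{\rho_f}$, $\rho_{\lambda_f}\sigma_f=1$, $\pi_f\lambda_{\rho_f}=1$, $E(1_X,\rho_f)\sigma_f=1$, $\pi_fE(\lambda_f,1_Y)=1$,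 $E(1_X,\sigma_f)\sigma_f=\sigma_{\lambda_f}\sigma_f$, $\pi_fE(\pi_f,1_Y)=\pi_f\pi_{\rho_f}$, and $\sigma_f\pi_f=\pi_{\lambda_f}E(\sigma_f,\pi_f)\sigma_{\rho_f}$ (equivalently: a comonad $\mathsf L$ on $\mathcal{C}^{\mathbf 2}$ over $\mathrm{dom}$ with underlying functor $L$, a monad $\mathsf R$ over $\mathrm{cod}$ with underlying functor $R$, and a distributive law $LR\Rightarrow RL$). *)

From Stdlib Require Import ProofIrrelevance.

Set Implicit Arguments.
Unset Strict Implicit.
Set Primitive Projections.

Record Category := mkCategory {
  Ob :> Type;
  Hom : Ob -> Ob -> Type;
  idm : forall a : Ob, Hom a a;
  comp : forall a b c : Ob, Hom b c -> Hom a b -> Hom a c;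
  comp_id_l : forall a b (f : Hom a b), comp (idm b) f = f;
  comp_id_r : forall a b (f : Hom a b), comp f (idm a) = f;
  comp_assoc : forall a b c d (f : Hom a b) (g : Hom b c) (h : Hom c d),
      comp h (comp g f) = comp (comp h g) f }.

Arguments Hom {c0} _ _.
Arguments idm {c0} a.
Arguments comp {c0 a b c} _ _.
Arguments comp_id_l {c0 a b} f.
Arguments comp_id_r {c0 a b} f.
Arguments comp_assoc {c0 a b c d} f g h.

Record Arr (C : Category) := mkArr { adom : C; acod : C; amor : Hom adom acod }.
Arguments mkArr {C adom acod} amor.
Arguments adom {C} _.
Arguments acod {C} _.
Arguments amor {C} _.

Record Sq (C : Category) (f g : Arr C) := mkSq {
  sq_top : Hom (adom f) (adom g);
  sq_bot : Hom (acod f) (acod g);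
  sq_comm : comp (amor g) sq_top = comp sq_bot (amor f) }.
Arguments mkSq {C f g} & sq_top sq_bot sq_comm.
Arguments sq_top {C f g} _.
Arguments sq_bot {C f g} _.
Arguments sq_comm {C f g} _.

Lemma sq_eq {C : Category} {f g : Arr C} (s t : Sq f g) :
  sq_top s = sq_top t -> sq_bot s = sq_bot t -> s = t.
Proof.
  destruct s as [a b p], t as [a' b' p']; simpl; intros e1 e2.
  subst a' b'. f_equal. apply proof_irrelevance.
Qed.

Lemma sq_id_comm {C : Category} (f : Arr C) :
  comp (amor f) (idm (adom f)) = comp (idm (acod f)) (amor f).
Proof. rewrite comp_id_l, comp_id_r; reflexivity. Qed.

Definition sq_id {C : Category} (f : Arr C) : Sq f f :=
  mkSq (idm (adom f)) (idm (acod f)) (sq_id_comm f).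

Lemma sq_comp_comm {C : Category} {f g h : Arr C} (t : Sq g h) (s : Sq f g) :
  comp (amor h) (comp (sq_top t) (sq_top s))
  = comp (comp (sq_bot t) (sq_bot s)) (amor f).
Proof.
  rewrite comp_assoc, (sq_comm t), <- comp_assoc, (sq_comm s), comp_assoc.
  reflexivity.
Qed.

Definition sq_comp {C : Category} {f g h : Arr C} (t : Sq g h) (s : Sq f g)
  : Sq f h :=
  mkSq (comp (sq_top t) (sq_top s)) (comp (sq_bot t) (sq_bot s)) (sq_comp_comm t s).

Record FF (C : Category) := mkFF {
  ffE : Arr C -> C;
  ffEm : forall f g : Arr C, Sq f g -> Hom (ffE f) (ffE g);
  ffEm_id : forall f, ffEm (sq_id f) = idm (ffE f);
  ffEm_comp : forall f g h (t : Sq g h) (s : Sq f g),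
      ffEm (sq_comp t s) = comp (ffEm t) (ffEm s);
  fflam : forall f : Arr C, Hom (adom f) (ffE f);
  ffrho : forall f : Arr C, Hom (ffE f) (acod f);
  fflam_nat : forall f g (s : Sq f g),
      comp (ffEm s) (fflam f) = comp (fflam g) (sq_top s);
  ffrho_nat : forall f g (s : Sq f g),
      comp (ffrho g) (ffEm s) = comp (sq_bot s) (ffrho f);
  fffac : forall f, comp (ffrho f) (fflam f) = amor f }.
Arguments ffE {C} f0 f.
Arguments ffEm {C} f0 {f g} s.
Arguments fflam {C} f0 f.
Arguments ffrho {C} f0 f.
Arguments fflam_nat {C} f0 {f g} s.
Arguments ffrho_nat {C} f0 {f g} s.
Arguments fffac {C} f0 f.
Arguments ffEm_id {C} f0 f.
Arguments ffEm_comp {C} f0 {f g h} t s.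

Definition lamArr {C : Category} (A : FF C) (f : Arr C) : Arr C := mkArr (fflam A f).
Definition rhoArr {C : Category} (A : FF C) (f : Arr C) : Arr C := mkArr (ffrho A f).

Lemma Lsq_comm {C : Category} (A : FF C) {f g : Arr C} (s : Sq f g) :
  comp (fflam A g) (sq_top s) = comp (ffEm A s) (fflam A f).
Proof. symmetry; apply fflam_nat. Qed.
Definition Lsq {C : Category} (A : FF C) {f g : Arr C} (s : Sq f g)
  : Sq (lamArr A f) (lamArr A g) := @mkSq C (lamArr A f) (lamArr A g) (sq_top s) (ffEm A s) (Lsq_comm A s).

Definition Rsq {C : Category} (A : FF C) {f g : Arr C} (s : Sq f g)
  : Sq (rhoArr A f) (rhoArr A g) := @mkSq C (rhoArr A f) (rhoArr A g) (ffEm A s) (sq_bot s) (ffrho_nat A s).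

Record FFHom {C : Category} (A B : FF C) := mkFFHom {
  ffh : forall f : Arr C, Hom (ffE A f) (ffE B f);
  ffh_nat : forall f g (s : Sq f g), comp (ffEm B s) (ffh f) = comp (ffh g) (ffEm A s);
  ffh_lam : forall f, comp (ffh f) (fflam A f) = fflam B f;
  ffh_rho : forall f, comp (ffrho B f) (ffh f) = ffrho A f }.
Arguments ffh {C A B} _ f.
Arguments ffh_lam {C A B} _ f.
Arguments ffh_rho {C A B} _ f.

Lemma idh_nat {C : Category} (A : FF C) f g (s : Sq f g) :
  comp (ffEm A s) (idm (ffE A f)) = comp (idm (ffE A g)) (ffEm A s).
Proof. rewrite comp_id_l, comp_id_r; reflexivity. Qed.
Definition idh {C : Category} (A : FF C) : FFHom A A :=
  @mkFFHom C A A (fun f => idm (ffE A f)) (idh_nat A)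
    (fun f => comp_id_l (fflam A f)) (fun f => comp_id_r (ffrho A f)).

(* The monoidal structure (x) : (E',l',r') (x) (E,l,r) factorises f as
   l'_{r_f} l_f followed by r'_{r_f}; unit I = (dom, 1, kappa).            *)
Section Tensor.
Context {C : Category}.

Lemma Rsq_id (A : FF C) f : Rsq A (sq_id f) = sq_id (rhoArr A f).
Proof. apply sq_eq; simpl; [apply ffEm_id | reflexivity]. Qed.
Lemma Rsq_comp (A : FF C) f g h (t : Sq g h) (s : Sq f g) :
  Rsq A (sq_comp t s) = sq_comp (Rsq A t) (Rsq A s).
Proof. apply sq_eq; simpl; [apply ffEm_comp | reflexivity]. Qed.
Lemma Lsq_id (A : FF C) f : Lsq A (sq_id f) = sq_id (lamArr A f).
Proof. apply sq_eq; simpl; [reflexivity | apply ffEm_id]. Qed.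
Lemma Lsq_comp (A : FF C) f g h (t : Sq g h) (s : Sq f g) :
  Lsq A (sq_comp t s) = sq_comp (Lsq A t) (Lsq A s).
Proof. apply sq_eq; simpl; [reflexivity | apply ffEm_comp]. Qed.

Lemma tensor_Em_id (A' A : FF C) f :
  ffEm A' (Rsq A (sq_id f)) = idm (ffE A' (rhoArr A f)).
Proof. rewrite Rsq_id; apply ffEm_id. Qed.
Lemma tensor_Em_comp (A' A : FF C) f g h (t : Sq g h) (s : Sq f g) :
  ffEm A' (Rsq A (sq_comp t s)) = comp (ffEm A' (Rsq A t)) (ffEm A' (Rsq A s)).
Proof. rewrite Rsq_comp; apply ffEm_comp. Qed.
Lemma tensor_lam_nat (A' A : FF C) f g (s : Sq f g) :
  comp (ffEm A' (Rsq A s)) (comp (fflam A' (rhoArr A f)) (fflam A f))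
  = comp (comp (fflam A' (rhoArr A g)) (fflam A g)) (sq_top s).
Proof.
  rewrite comp_assoc, (fflam_nat A' (Rsq A s)); simpl.
  rewrite <- !comp_assoc, (fflam_nat A s); reflexivity.
Qed.
Lemma tensor_rho_nat (A' A : FF C) f g (s : Sq f g) :
  comp (ffrho A' (rhoArr A g)) (ffEm A' (Rsq A s))
  = comp (sq_bot s) (ffrho A' (rhoArr A f)).
Proof. exact (ffrho_nat A' (Rsq A s)). Qed.
Lemma tensor_fac (A' A : FF C) f :
  comp (ffrho A' (rhoArr A f)) (comp (fflam A' (rhoArr A f)) (fflam A f)) = amor f.
Proof. rewrite comp_assoc, (fffac A' (rhoArr A f)); apply (fffac A f). Qed.

Definition tensor (A' A : FF C) : FF C :=
  @mkFF C (fun f => ffE A' (rhoArr A f))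
    (fun f g s => ffEm A' (Rsq A s))
    (tensor_Em_id A' A) (tensor_Em_comp A' A)
    (fun f => comp (fflam A' (rhoArr A f)) (fflam A f))
    (fun f => ffrho A' (rhoArr A f))
    (tensor_lam_nat A' A) (tensor_rho_nat A' A) (tensor_fac A' A).

(* The monoidal structure (.) : (E',l',r') (.) (E,l,r) factorises f as
   l'_{l_f} followed by r_f r'_{l_f}; unit bot = (cod, kappa, 1).         *)
Lemma odot_Em_id (A' A : FF C) f :
  ffEm A' (Lsq A (sq_id f)) = idm (ffE A' (lamArr A f)).
Proof. rewrite Lsq_id; apply ffEm_id. Qed.
Lemma odot_Em_comp (A' A : FF C) f g h (t : Sq g h) (s : Sq f g) :
  ffEm A' (Lsq A (sq_comp t s)) = comp (ffEm A' (Lsq A t)) (ffEm A' (Lsq A s)).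
Proof. rewrite Lsq_comp; apply ffEm_comp. Qed.
Lemma odot_lam_nat (A' A : FF C) f g (s : Sq f g) :
  comp (ffEm A' (Lsq A s)) (fflam A' (lamArr A f))
  = comp (fflam A' (lamArr A g)) (sq_top s).
Proof. exact (fflam_nat A' (Lsq A s)). Qed.
Lemma odot_rho_nat (A' A : FF C) f g (s : Sq f g) :
  comp (comp (ffrho A g) (ffrho A' (lamArr A g))) (ffEm A' (Lsq A s))
  = comp (sq_bot s) (comp (ffrho A f) (ffrho A' (lamArr A f))).
Proof.
  rewrite <- (comp_assoc (ffEm A' (Lsq A s))).
  pose proof (ffrho_nat A' (Lsq A s)) as H; simpl in H; rewrite H.
  rewrite !comp_assoc, (ffrho_nat A s); reflexivity.
Qed.
Lemma odot_fac (A' A : FF C) f :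
  comp (comp (ffrho A f) (ffrho A' (lamArr A f))) (fflam A' (lamArr A f)) = amor f.
Proof.
  rewrite <- comp_assoc.
  exact (eq_trans (f_equal (comp (ffrho A f)) (fffac A' (lamArr A f))) (fffac A f)).
Qed.

Definition odot (A' A : FF C) : FF C :=
  @mkFF C (fun f => ffE A' (lamArr A f))
    (fun f g s => ffEm A' (Lsq A s))
    (odot_Em_id A' A) (odot_Em_comp A' A)
    (fun f => fflam A' (lamArr A f))
    (fun f => comp (ffrho A f) (ffrho A' (lamArr A f)))
    (odot_lam_nat A' A) (odot_rho_nat A' A) (odot_fac A' A).

Lemma I_lam_nat (f g : Arr C) (s : Sq f g) :
  comp (sq_top s) (idm (adom f)) = comp (idm (adom g)) (sq_top s).
Proof. rewrite comp_id_l, comp_id_r; reflexivity. Qed.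
Lemma I_fac (f : Arr C) : comp (amor f) (idm (adom f)) = amor f.
Proof. apply comp_id_r. Qed.
Definition ffI : FF C :=
  @mkFF C (fun f => adom f) (fun (f g : Arr C) (s : Sq f g) => sq_top s)
    (fun f : Arr C => eq_refl) (fun (f g h : Arr C) (t : Sq g h) (s : Sq f g) => eq_refl)
    (fun f : Arr C => idm (adom f)) (fun f : Arr C => amor f)
    I_lam_nat (fun (f g : Arr C) (s : Sq f g) => sq_comm s) I_fac.

Lemma B_lam_nat (f g : Arr C) (s : Sq f g) :
  comp (sq_bot s) (amor f) = comp (amor g) (sq_top s).
Proof. symmetry; apply sq_comm. Qed.
Lemma B_rho_nat (f g : Arr C) (s : Sq f g) :
  comp (idm (acod g)) (sq_bot s) = comp (sq_bot s) (idm (acod f)).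
Proof. rewrite comp_id_l, comp_id_r; reflexivity. Qed.
Lemma B_fac (f : Arr C) : comp (idm (acod f)) (amor f) = amor f.
Proof. apply comp_id_l. Qed.
Definition ffBot : FF C :=
  @mkFF C (fun f => acod f) (fun (f g : Arr C) (s : Sq f g) => sq_bot s)
    (fun f : Arr C => eq_refl) (fun (f g h : Arr C) (t : Sq g h) (s : Sq f g) => eq_refl)
    (fun f : Arr C => amor f) (fun f : Arr C => idm (acod f))
    B_lam_nat B_rho_nat B_fac.

(* the unique morphism I -> A (I is initial) and A -> bot (bot is terminal) *)
Lemma fromI_nat (A : FF C) (f g : Arr C) (s : Sq f g) :
  comp (ffEm A s) (fflam A f) = comp (fflam A g) (sq_top s).
Proof. apply fflam_nat. Qed.
Definition fromI (A : FF C) : FFHom ffI A :=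
  @mkFFHom C ffI A (fun f => fflam A f) (fromI_nat A)
    (fun f => comp_id_r (fflam A f)) (fun f => fffac A f).

Lemma toBot_nat (A : FF C) (f g : Arr C) (s : Sq f g) :
  comp (sq_bot s) (ffrho A f) = comp (ffrho A g) (ffEm A s).
Proof. symmetry; apply ffrho_nat. Qed.
Definition toBot (A : FF C) : FFHom A ffBot :=
  @mkFFHom C A ffBot (fun f => ffrho A f) (toBot_nat A)
    (fun f => fffac A f) (fun f => comp_id_l (ffrho A f)).

Lemma sqR_comm {A F : FF C} (al : FFHom A F) f :
  comp (ffrho F f) (ffh al f) = comp (idm (acod f)) (ffrho A f).
Proof. rewrite comp_id_l; apply ffh_rho. Qed.
Definition sqR {A F : FF C} (al : FFHom A F) f : Sq (rhoArr A f) (rhoArr F f) :=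
  mkSq (ffh al f) (idm (acod f)) (sqR_comm al f).

Lemma sqL_comm {A F : FF C} (al : FFHom A F) f :
  comp (fflam F f) (idm (adom f)) = comp (ffh al f) (fflam A f).
Proof. rewrite comp_id_r; symmetry; apply ffh_lam. Qed.
Definition sqL {A F : FF C} (al : FFHom A F) f : Sq (lamArr A f) (lamArr F f) :=
  mkSq (idm (adom f)) (ffh al f) (sqL_comm al f).

Definition tensor_h {A' F' A F : FF C} (be : FFHom A' F') (al : FFHom A F) (f : Arr C)
  : Hom (ffE (tensor A' A) f) (ffE (tensor F' F) f) :=
  comp (ffh be (rhoArr F f)) (ffEm A' (sqR al f)).

Definition odot_h {A' F' A F : FF C} (be : FFHom A' F') (al : FFHom A F) (f : Arr C)
  : Hom (ffE (odot A' A) f) (ffE (odot F' F) f) :=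
  comp (ffh be (lamArr F f)) (ffEm A' (sqL al f)).

(* the interchange z_{A,B,C,D} : (A.B)x(C.D) -> (AxC).(BxD), componentwise:
   z_f = E^1( E^3(1_X, l^2_{r^4_f}), E^2(r^3_{l^4_f}, 1_Y) ).              *)
Lemma sqz1_comm (B D : FF C) f :
  comp (amor (lamArr (tensor B D) f)) (idm (adom f))
  = comp (fflam B (rhoArr D f)) (fflam D f).
Proof. apply comp_id_r. Qed.
Definition sqz1 (B D : FF C) f : Sq (lamArr D f) (lamArr (tensor B D) f) :=
  mkSq (idm (adom f)) (fflam B (rhoArr D f)) (sqz1_comm B D f).

Lemma sqz2_comm (Cc D : FF C) f :
  comp (ffrho D f) (ffrho Cc (lamArr D f))
  = comp (idm (acod f)) (amor (rhoArr (odot Cc D) f)).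
Proof. rewrite comp_id_l; reflexivity. Qed.
Definition sqz2 (Cc D : FF C) f : Sq (rhoArr (odot Cc D) f) (rhoArr D f) :=
  mkSq (ffrho Cc (lamArr D f)) (idm (acod f)) (sqz2_comm Cc D f).

Lemma sqz_comm (B Cc D : FF C) f :
  comp (ffrho Cc (lamArr (tensor B D) f)) (ffEm Cc (sqz1 B D f))
  = comp (ffEm B (sqz2 Cc D f)) (fflam B (rhoArr (odot Cc D) f)).
Proof.
  rewrite (ffrho_nat Cc (sqz1 B D f)), (fflam_nat B (sqz2 Cc D f)); reflexivity.
Qed.
Definition sqz (B Cc D : FF C) f :
  Sq (lamArr B (rhoArr (odot Cc D) f)) (rhoArr Cc (lamArr (tensor B D) f)) :=
  mkSq (ffEm Cc (sqz1 B D f)) (ffEm B (sqz2 Cc D f)) (sqz_comm B Cc D f).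

Definition zmap (A B Cc D : FF C) (f : Arr C)
  : Hom (ffE (tensor (odot A B) (odot Cc D)) f) (ffE (odot (tensor A Cc) (tensor B D)) f) :=
  ffEm A (sqz B Cc D f).

Definition mmap : FFHom (tensor ffBot ffBot) ffBot := toBot (tensor ffBot ffBot).
Definition cmap : FFHom ffI (odot ffI ffI) := fromI (odot ffI ffI).
Definition jmap : FFHom ffI ffBot := toBot ffI.

End Tensor.

(* Since the monoidal structures
   are strict, associators/unitors are identities; morphisms of Ff_C are
   equal iff their components are, so the axioms are stated componentwise. *)
Record BialgStr {C : Category} (A : FF C) := mkBialgStr {
  b_eta : FFHom ffI A;
  b_mu : FFHom (tensor A A) A;
  b_eps : FFHom A ffBot;
  b_delta : FFHom A (odot A A);
  mon_assoc : forall f,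
    comp (ffh b_mu f) (tensor_h b_mu (idh A) f)
    = comp (ffh b_mu f) (tensor_h (idh A) b_mu f);
  mon_unit_l : forall f, comp (ffh b_mu f) (tensor_h b_eta (idh A) f) = idm (ffE A f);
  mon_unit_r : forall f, comp (ffh b_mu f) (tensor_h (idh A) b_eta f) = idm (ffE A f);
  com_coassoc : forall f,
    comp (odot_h b_delta (idh A) f) (ffh b_delta f)
    = comp (odot_h (idh A) b_delta f) (ffh b_delta f);
  com_counit_l : forall f, comp (odot_h b_eps (idh A) f) (ffh b_delta f) = idm (ffE A f);
  com_counit_r : forall f, comp (odot_h (idh A) b_eps f) (ffh b_delta f) = idm (ffE A f);
  bi_delta_eta : forall f,
    comp (ffh b_delta f) (ffh b_eta f) = comp (odot_h b_eta b_eta f) (ffh cmap f);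
  bi_eps_mu : forall f,
    comp (ffh b_eps f) (ffh b_mu f) = comp (ffh mmap f) (tensor_h b_eps b_eps f);
  bi_eps_eta : forall f, comp (ffh b_eps f) (ffh b_eta f) = ffh jmap f;
  bi_delta_mu : forall f,
    comp (ffh b_delta f) (ffh b_mu f)
    = comp (odot_h b_mu b_mu f) (comp (zmap A A A A f) (tensor_h b_delta b_delta f)) }.

Record Bialgebra (C : Category) := mkBialgebra {
  bi_carrier : FF C;
  bi_str : BialgStr bi_carrier }.

Section NWFSsquares.
Context {C : Category} (A : FF C).

Lemma sq_1rho_comm f :
  comp (amor f) (idm (adom f)) = comp (ffrho A f) (amor (lamArr A f)).
Proof. rewrite comp_id_r; symmetry; exact (fffac A f). Qed.
Definition sq_1rho f : Sq (lamArr A f) f := mkSq (idm (adom f)) (ffrho A f) (sq_1rho_comm f).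

Lemma sq_lam1_comm f :
  comp (amor (rhoArr A f)) (fflam A f) = comp (idm (acod f)) (amor f).
Proof. rewrite comp_id_l; exact (fffac A f). Qed.
Definition sq_lam1 f : Sq f (rhoArr A f) := mkSq (fflam A f) (idm (acod f)) (sq_lam1_comm f).

Lemma sq_1s_comm f (s : Hom (ffE A f) (ffE A (lamArr A f)))
  (e : comp s (fflam A f) = fflam A (lamArr A f)) :
  comp (amor (lamArr A (lamArr A f))) (idm (adom f)) = comp s (amor (lamArr A f)).
Proof. rewrite comp_id_r; symmetry; exact e. Qed.
Definition sq_1s f s e : Sq (lamArr A f) (lamArr A (lamArr A f)) :=
  mkSq (idm (adom f)) s (@sq_1s_comm f s e).

Lemma sq_p1_comm f (p : Hom (ffE A (rhoArr A f)) (ffE A f))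
  (e : comp (ffrho A f) p = ffrho A (rhoArr A f)) :
  comp (amor (rhoArr A f)) p = comp (idm (acod f)) (amor (rhoArr A (rhoArr A f))).
Proof. rewrite comp_id_l; exact e. Qed.
Definition sq_p1 f p e : Sq (rhoArr A (rhoArr A f)) (rhoArr A f) :=
  mkSq p (idm (acod f)) (@sq_p1_comm f p e).

Lemma sq_sp_comm f (s : Hom (ffE A f) (ffE A (lamArr A f)))
  (p : Hom (ffE A (rhoArr A f)) (ffE A f))
  (e3 : comp (ffrho A (lamArr A f)) s = idm (ffE A f))
  (e4 : comp p (fflam A (rhoArr A f)) = idm (ffE A f)) :
  comp (amor (rhoArr A (lamArr A f))) s = comp p (amor (lamArr A (rhoArr A f))).
Proof. exact (eq_trans e3 (eq_sym e4)). Qed.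
Definition sq_sp f s p e3 e4 : Sq (lamArr A (rhoArr A f)) (rhoArr A (lamArr A f)) :=
  mkSq s p (@sq_sp_comm f s p e3 e4).

End NWFSsquares.

Record NWFSStr {C : Category} (A : FF C) := mkNWFSStr {
  nw_sigma : forall f : Arr C, Hom (ffE A f) (ffE A (lamArr A f));
  nw_pi : forall f : Arr C, Hom (ffE A (rhoArr A f)) (ffE A f);
  nw_sigma_nat : forall f g (s : Sq f g),
    comp (ffEm A (Lsq A s)) (nw_sigma f) = comp (nw_sigma g) (ffEm A s);
  nw_pi_nat : forall f g (s : Sq f g),
    comp (nw_pi g) (ffEm A (Rsq A s)) = comp (ffEm A s) (nw_pi f);
  nw_sig_lam : forall f, comp (nw_sigma f) (fflam A f) = fflam A (lamArr A f);
  nw_rho_pi : forall f, comp (ffrho A f) (nw_pi f) = ffrho A (rhoArr A f);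
  nw_rho_sig : forall f, comp (ffrho A (lamArr A f)) (nw_sigma f) = idm (ffE A f);
  nw_pi_lam : forall f, comp (nw_pi f) (fflam A (rhoArr A f)) = idm (ffE A f);
  nw_counit : forall f, comp (ffEm A (sq_1rho A f)) (nw_sigma f) = idm (ffE A f);
  nw_unit : forall f, comp (nw_pi f) (ffEm A (sq_lam1 A f)) = idm (ffE A f);
  nw_coassoc : forall f,
    comp (ffEm A (@sq_1s C A f (nw_sigma f) (nw_sig_lam f))) (nw_sigma f)
    = comp (nw_sigma (lamArr A f)) (nw_sigma f);
  nw_assoc : forall f,
    comp (nw_pi f) (ffEm A (@sq_p1 C A f (nw_pi f) (nw_rho_pi f)))
    = comp (nw_pi f) (nw_pi (rhoArr A f));
  nw_distr : forall f,
    comp (nw_sigma f) (nw_pi f)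
    = comp (nw_pi (lamArr A f))
        (comp (ffEm A (@sq_sp C A f (nw_sigma f) (nw_pi f) (nw_rho_sig f) (nw_pi_lam f))) (nw_sigma (rhoArr A f))) }.

Record NWFS (C : Category) := mkNWFS {
  nw_ff : FF C;
  nw_str : NWFSStr nw_ff }.

(** The unit [I] of [⊗] is initial and the unit [⊥] of [⊙] is terminal in
    [Ff_C], so the unit and counit of a bialgebra on [(E, λ, ρ)] are forced
    to be [λ] and [ρ], and three of the four compatibility axioms hold
    automatically.  What remains is [μ], whose components are maps
    [π_f : E(ρ_f) → E f], and [Δ], whose components are maps
    [σ_f : E f → E(λ_f)].  Whiskering by identities and by the forced
    (co)unit computes to [E] applied to explicit squares, so the monoid laws
    become the monad laws of [R], the comonoid laws the comonad laws of [L],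
    and [Δμ = (μ ⊙ μ) z (Δ ⊗ Δ)] becomes the distributive law, because the
    middle of its right-hand side collapses under functoriality of [E] to
    [E(σ_f, π_f)]. *)
From Stdlib Require Import ProofIrrelevance FunctionalExtensionality.

Section FunctorialFactorisations.
Context {C : Category}.

Lemma ffEm_sq_idm (A : FF C) {f : Arr C} (s : Sq f f) :
  sq_top s = idm (adom f) -> sq_bot s = idm (acod f) -> ffEm A s = idm (ffE A f).
Proof. intros e_top e_bot; rewrite (sq_eq (t := sq_id f) e_top e_bot); apply ffEm_id. Qed.

Lemma ffh_from_ffI (A : FF C) (eta : FFHom ffI A) f : ffh eta f = fflam A f.
Proof. rewrite <- (ffh_lam eta f); symmetry; apply comp_id_r. Qed.

Lemma ffh_to_ffBot (A : FF C) (eps : FFHom A ffBot) f : ffh eps f = ffrho A f.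
Proof. rewrite <- (ffh_rho eps f); symmetry; apply comp_id_l. Qed.

Lemma tensor_h_idh_l (A' A F : FF C) (al : FFHom A F) f :
  tensor_h (idh A') al f = ffEm A' (sqR al f).
Proof. apply comp_id_l. Qed.

Lemma tensor_h_idh_r (A' F' A : FF C) (be : FFHom A' F') f :
  tensor_h be (idh A) f = ffh be (rhoArr A f).
Proof. unfold tensor_h; rewrite ffEm_sq_idm by reflexivity; apply comp_id_r. Qed.

Lemma odot_h_idh_l (A' A F : FF C) (al : FFHom A F) f :
  odot_h (idh A') al f = ffEm A' (sqL al f).
Proof. apply comp_id_l. Qed.

Lemma odot_h_idh_r (A' F' A : FF C) (be : FFHom A' F') f :
  odot_h be (idh A) f = ffh be (lamArr A f).
Proof. unfold odot_h; rewrite ffEm_sq_idm by reflexivity; apply comp_id_r. Qed.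

Lemma sqR_from_ffI (A : FF C) (eta : FFHom ffI A) f : sqR eta f = sq_lam1 A f.
Proof. apply sq_eq; [apply ffh_from_ffI | reflexivity]. Qed.

Lemma sqL_to_ffBot (A : FF C) (eps : FFHom A ffBot) f : sqL eps f = sq_1rho A f.
Proof. apply sq_eq; [reflexivity | apply ffh_to_ffBot]. Qed.

Lemma sqR_sq_p1 (A : FF C) (mu : FFHom (tensor A A) A) f e :
  sqR mu f = @sq_p1 C A f (ffh mu f) e.
Proof. apply sq_eq; reflexivity. Qed.

Lemma sqL_sq_1s (A : FF C) (de : FFHom A (odot A A)) f e :
  sqL de f = @sq_1s C A f (ffh de f) e.
Proof. apply sq_eq; reflexivity. Qed.

Lemma delta_eta_compat (A : FF C) (eta : FFHom ffI A) (de : FFHom A (odot A A)) f :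
  comp (ffh de f) (ffh eta f) = comp (odot_h eta eta f) (ffh cmap f).
Proof. unfold odot_h; simpl; rewrite !ffh_from_ffI, !comp_id_r; exact (ffh_lam de f). Qed.

Lemma eps_mu_compat (A : FF C) (eps : FFHom A ffBot) (mu : FFHom (tensor A A) A) f :
  comp (ffh eps f) (ffh mu f) = comp (ffh mmap f) (tensor_h eps eps f).
Proof.
  change (ffh mmap f) with (idm (acod f)); unfold tensor_h.
  rewrite !ffh_to_ffBot, comp_id_l.
  transitivity (ffrho A (rhoArr A f)); [exact (ffh_rho mu f) |].
  symmetry; etransitivity; [exact (ffrho_nat A (sqR eps f)) | apply comp_id_l].
Qed.

Lemma eps_eta_compat (A : FF C) (eta : FFHom ffI A) (eps : FFHom A ffBot) f :
  comp (ffh eps f) (ffh eta f) = ffh jmap f.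
Proof. rewrite ffh_to_ffBot, ffh_from_ffI; apply fffac. Qed.

Lemma interchange_square (A : FF C) (mu : FFHom (tensor A A) A)
  (de : FFHom A (odot A A)) f e_rho e_lam :
  sq_comp (Rsq A (sqL mu f)) (sq_comp (sqz A A A f) (Lsq A (sqR de f)))
  = @sq_sp C A f (ffh de f) (ffh mu f) e_rho e_lam.
Proof.
  apply sq_eq; simpl.
  - rewrite comp_assoc, <- ffEm_comp.
    rewrite (ffEm_sq_idm A (sq_comp (sqL mu f) (sqz1 A A f))); simpl.
    + apply comp_id_l.
    + apply comp_id_l.
    + exact e_lam.
  - rewrite <- ffEm_comp.
    rewrite (ffEm_sq_idm A (sq_comp (sqz2 A A f) (sqR de f))); simpl.
    + apply comp_id_r.
    + exact e_rho.
    + apply comp_id_l.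
Qed.

Lemma delta_mu_interchange (A : FF C) (mu : FFHom (tensor A A) A)
  (de : FFHom A (odot A A)) f e_rho e_lam :
  comp (odot_h mu mu f) (comp (zmap A A A A f) (tensor_h de de f))
  = comp (ffh mu (lamArr A f))
      (comp (ffEm A (@sq_sp C A f (ffh de f) (ffh mu f) e_rho e_lam))
         (ffh de (rhoArr A f))).
Proof.
  rewrite <- (interchange_square A mu de f e_rho e_lam), !ffEm_comp.
  unfold odot_h, zmap, tensor_h; rewrite <- !comp_assoc.
  do 3 apply (f_equal (comp _)).
  exact (eq_sym (ffh_nat de (sqR de f))).
Qed.

End FunctorialFactorisations.

Section NWFSToBialgebra.
Context {C : Category} {A : FF C} (n : NWFSStr A).

Lemma nw_pi_tensor_lam f : comp (nw_pi n f) (fflam (tensor A A) f) = fflam A f.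
Proof.
  transitivity (comp (comp (nw_pi n f) (fflam A (rhoArr A f))) (fflam A f)).
  - apply comp_assoc.
  - rewrite nw_pi_lam; apply comp_id_l.
Qed.

Lemma nw_sigma_odot_rho f : comp (ffrho (odot A A) f) (nw_sigma n f) = ffrho A f.
Proof.
  transitivity (comp (ffrho A f) (comp (ffrho A (lamArr A f)) (nw_sigma n f))).
  - symmetry; apply comp_assoc.
  - rewrite nw_rho_sig; apply comp_id_r.
Qed.

Definition nw_mult : FFHom (tensor A A) A :=
  @mkFFHom C (tensor A A) A (nw_pi n) (fun f g s => eq_sym (nw_pi_nat n s))
    nw_pi_tensor_lam (nw_rho_pi n).

Definition nw_comult : FFHom A (odot A A) :=
  @mkFFHom C A (odot A A) (nw_sigma n) (fun f g s => nw_sigma_nat n s)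
    (nw_sig_lam n) nw_sigma_odot_rho.

Definition nwfs_bialgebra : BialgStr A.
Proof.
  refine (@mkBialgStr C A (fromI A) nw_mult (toBot A) nw_comult _ _ _ _ _ _
            (delta_eta_compat A (fromI A) nw_comult)
            (eps_mu_compat A (toBot A) nw_mult)
            (eps_eta_compat A (fromI A) (toBot A)) _); intro f.
  - rewrite tensor_h_idh_r, tensor_h_idh_l, (sqR_sq_p1 A nw_mult f (nw_rho_pi n f)).
    symmetry; exact (nw_assoc n f).
  - rewrite tensor_h_idh_r, ffh_from_ffI; exact (nw_pi_lam n f).
  - rewrite tensor_h_idh_l, sqR_from_ffI; exact (nw_unit n f).
  - rewrite odot_h_idh_r, odot_h_idh_l, (sqL_sq_1s A nw_comult f (nw_sig_lam n f)).
    symmetry; exact (nw_coassoc n f).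
  - rewrite odot_h_idh_r, ffh_to_ffBot; exact (nw_rho_sig n f).
  - rewrite odot_h_idh_l, sqL_to_ffBot; exact (nw_counit n f).
  - rewrite (delta_mu_interchange A nw_mult nw_comult f (nw_rho_sig n f) (nw_pi_lam n f)).
    exact (nw_distr n f).
Defined.

End NWFSToBialgebra.

Section BialgebraToNWFS.
Context {C : Category} {A : FF C} (b : BialgStr A).

Lemma bialg_rho_delta f : comp (ffrho A (lamArr A f)) (ffh (b_delta b) f) = idm (ffE A f).
Proof. rewrite <- (com_counit_l b f), odot_h_idh_r, ffh_to_ffBot; reflexivity. Qed.

Lemma bialg_mu_lam f : comp (ffh (b_mu b) f) (fflam A (rhoArr A f)) = idm (ffE A f).
Proof. rewrite <- (mon_unit_l b f), tensor_h_idh_r, ffh_from_ffI; reflexivity. Qed.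

Definition bialgebra_nwfs : NWFSStr A.
Proof.
  refine (@mkNWFSStr C A (ffh (b_delta b)) (ffh (b_mu b)) _ _
            (ffh_lam (b_delta b)) (ffh_rho (b_mu b)) bialg_rho_delta bialg_mu_lam
            _ _ _ _ _).
  - intros f g s; exact (ffh_nat (b_delta b) s).
  - intros f g s; exact (eq_sym (ffh_nat (b_mu b) s)).
  - intro f; rewrite <- (com_counit_r b f), odot_h_idh_l, sqL_to_ffBot; reflexivity.
  - intro f; rewrite <- (mon_unit_r b f), tensor_h_idh_l, sqR_from_ffI; reflexivity.
  - intro f; pose proof (com_coassoc b f) as coassoc.
    rewrite odot_h_idh_r, odot_h_idh_l,
      (sqL_sq_1s A (b_delta b) f (ffh_lam (b_delta b) f)) in coassoc.
    symmetry; exact coassoc.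
  - intro f; pose proof (mon_assoc b f) as assoc.
    rewrite tensor_h_idh_r, tensor_h_idh_l,
      (sqR_sq_p1 A (b_mu b) f (ffh_rho (b_mu b) f)) in assoc.
    symmetry; exact assoc.
  - intro f; pose proof (bi_delta_mu b f) as delta_mu.
    rewrite (delta_mu_interchange A (b_mu b) (b_delta b) f
               (bialg_rho_delta f) (bialg_mu_lam f)) in delta_mu.
    exact delta_mu.
Defined.

End BialgebraToNWFS.

Ltac unify_proofs :=
  repeat match goal with
  | p : ?P, q : ?P |- _ =>
      match type of P with Prop => assert (p = q) by apply proof_irrelevance; subst q end
  end.

Section Extensionality.
Context {C : Category}.

Lemma FFHom_ext (A B : FF C) (a b : FFHom A B) :
  (forall f, ffh a f = ffh b f) -> a = b.
Proof.
  destruct a as [a a_nat a_lam a_rho], b as [b b_nat b_lam b_rho]; simpl; intro e.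
  assert (a = b) by (apply functional_extensionality_dep; exact e); subst b.
  f_equal; apply proof_irrelevance.
Qed.

Lemma BialgStr_ext (A : FF C) (s t : BialgStr A) :
  (forall f, ffh (b_mu s) f = ffh (b_mu t) f) ->
  (forall f, ffh (b_delta s) f = ffh (b_delta t) f) -> s = t.
Proof.
  intros e_mu e_delta.
  assert (b_eta s = b_eta t) by (apply FFHom_ext; intro f; rewrite !ffh_from_ffI; reflexivity).
  assert (b_eps s = b_eps t) by (apply FFHom_ext; intro f; rewrite !ffh_to_ffBot; reflexivity).
  apply FFHom_ext in e_mu; apply FFHom_ext in e_delta.
  destruct s, t; simpl in *; subst; unify_proofs; reflexivity.
Qed.

Lemma NWFSStr_ext (A : FF C) (s t : NWFSStr A) :
  nw_sigma s = nw_sigma t -> nw_pi s = nw_pi t -> s = t.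
Proof. destruct s, t; simpl; intros; subst; unify_proofs; reflexivity. Qed.

End Extensionality.

Theorem proposition3p7 (C : Category) :
  exists (Phi : NWFS C -> Bialgebra C) (Psi : Bialgebra C -> NWFS C),
    (forall n : NWFS C, Psi (Phi n) = n) /\
    (forall b : Bialgebra C, Phi (Psi b) = b) /\
    (forall n : NWFS C, bi_carrier (Phi n) = nw_ff n).
Proof.
  exists (fun n => mkBialgebra (nwfs_bialgebra (nw_str n))).
  exists (fun b => mkNWFS (bialgebra_nwfs (bi_str b))).
  split; [| split].
  - intros [A n]; simpl; f_equal; apply NWFSStr_ext; reflexivity.
  - intros [A b]; simpl; f_equal; apply BialgStr_ext; reflexivity.
  - reflexivity.
Qed.
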